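(* For every odd prime $p$, $$\sum_{\substack{k_1,k_2,k_3,k_4 = 0\\ k_1+k_2+k_3+k_4 = p-1}}^{\frac{p-1}{2}} \left[\prod_{i=1}^4 (k_i+1)_{\frac{p-1}{2}}^2\right]\left(H_{\frac{p-1}{2}+k_4} - H_{k_4}\right) \equiv 0 \pmod{p}.$$
   Context: $(a)_n = a(a+1)\cdots(a+n-1)$ is the rising factorial with $(a)_0 = 1$; $H_n = \sum_{j=1}^n \frac1j$ with $H_0 = 0$. The sum runs over integers $0 \le k_i \le \frac{p-1}{2}$ with $\sum k_i = p-1$; the terms are $p$-integral rationals and the congruence is in $\mathbb{Z}_{(p)}$. *)

From mathcomp Require Import all_boot all_order all_algebra.
Set Implicit Arguments. Unset Strict Implicit. Unset Printing Implicit Defensive.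
Import Order.TTheory GRing.Theory Num.Theory.
Local Open Scope ring_scope.

Definition rising (a : rat) (n : nat) : rat := \prod_(i < n) (a + i%:R).

Definition harm (n : nat) : rat := \sum_(j < n) ((j.+1)%:R)^-1.

(* x ≡ 0 (mod p) in Z_(p): x is p-integral and p divides it, i.e. p divides
   the (reduced) numerator and not the denominator. *)
Definition cong0_Zp (p : nat) (x : rat) : Prop :=
  (p%:Z %| numq x)%Z /\ ~~ (p%:Z %| denq x)%Z.

From HB Require Import structures.
From mathcomp Require Import all_boot all_order all_algebra.
From mathcomp Require Import ring zify.
Set Implicit Arguments.
Unset Strict Implicit.
Unset Printing Implicit Defensive.

Import Order.TTheory GRing.Theory Num.Theory.
Local Open Scope ring_scope.

(* Write n = (p - 1) / 2, so that p = 2n + 1.  Modulo p, the reflection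
   k -> n - k fixes ((k+1)_n)^2, because (n-k+1)_n is the product of the
   p - (k+1+i), i < n; and it negates H_(n+k) - H_k, because 1/(p - y) is
   congruent to -1/y.  Reflecting all four indices preserves the constraint
   k1 + k2 + k3 + k4 = 2n, so the sum S is congruent to -S, and p odd gives
   S = 0 mod p. *)

(* For prime p this is the local ring Z_(p). *)
Definition pint (p : nat) : {pred rat} := fun x => coprime p `|denq x|.

Lemma pintP p x :
  reflect (exists2 d : nat, coprime p d & x * d%:R \is a Num.int) (x \in pint p).
Proof.
apply: (iffP idP) => [cop | [d cop /intrP[a xd]]].
  exists `|denq x|%N => //.
  by rewrite -[_%:R]/((`|denq x|%N%:Z)%:~R) absz_denq -numqE rpred_int.
have num_den : (numq x * d%:Z = a * denq x)%R.
  by apply: (@intr_inj rat); rewrite !rmorphM /= numqE mulrAC xd.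
have : (`|denq x| %| `|numq x| * d)%N.
  by rewrite -[d in (_ * d)%N]absz_nat -abszM num_den abszM dvdn_mull.
by rewrite Gauss_dvdr 1?coprime_sym ?coprime_num_den // => /coprime_dvdr; apply.
Qed.

Fact pint_subring_closed p : subring_closed (pint p).
Proof.
split=> [|x y|x y]; first exact: coprimen1.
- move=> /pintP[b cb xb] /pintP[c cc yc]; apply/pintP.
  exists (b * c)%N; first by rewrite coprimeMr cb cc.
  have -> : (x - y) * (b * c)%:R = x * b%:R * c%:R - y * c%:R * b%:R.
    by rewrite natrM; ring.
  by apply: rpredB; apply: rpredM => //; apply: rpred_nat.
- move=> /pintP[b cb xb] /pintP[c cc yc]; apply/pintP.
  exists (b * c)%N; first by rewrite coprimeMr cb cc.
  by rewrite natrM mulrACA; apply: rpredM.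
Qed.

HB.instance Definition _ p := GRing.isSubringClosed.Build rat (pint p)
  (pint_subring_closed p).

Lemma pintVn p (j : nat) : coprime p j -> j%:R^-1 \in pint p.
Proof.
move=> cpj; apply/pintP; exists j => //.
have [-> | j_neq0] := eqVneq j 0%N; first by rewrite mulr0 rpred0.
by rewrite mulVf ?rpred1 // pnatr_eq0.
Qed.

(* The ideal p Z_(p); note that [pmultiple 0] is all of rat, as x / 0 = 0. *)
Definition pmultiple (p : nat) : {pred rat} := fun x => x / p%:R \in pint p.

Fact pmultiple_zmod_closed p : zmod_closed (pmultiple p).
Proof.
split=> [|x y px py]; first by rewrite unfold_in /= mul0r rpred0.
by rewrite unfold_in /= mulrBl rpredB.
Qed.

HB.instance Definition _ p := GRing.isZmodClosed.Build rat (pmultiple p)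
  (pmultiple_zmod_closed p).

Lemma pmultipleE p x : (x \in pmultiple p) = (x / p%:R \in pint p).
Proof. by []. Qed.

Section PMultiple.

Variable p : nat.

Lemma pmultipleMr x y :
  x \in pmultiple p -> y \in pint p -> x * y \in pmultiple p.
Proof. by rewrite !pmultipleE mulrAC => px py; apply: rpredM. Qed.

Lemma pmultipleMl x y :
  x \in pint p -> y \in pmultiple p -> x * y \in pmultiple p.
Proof. by rewrite mulrC => px py; apply: pmultipleMr. Qed.

Lemma pmultipleMB a a' b b' : a' \in pint p -> b \in pint p ->
  a - b \in pmultiple p -> a' - b' \in pmultiple p ->
  a * a' - b * b' \in pmultiple p.
Proof.
move=> pa' pb pab pab'.
have -> : a * a' - b * b' = (a - b) * a' + b * (a' - b') by ring.
by apply: rpredD; [apply: pmultipleMr | apply: pmultipleMl].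
Qed.

Lemma pmultiple_prodB (I : Type) (r : seq I) (P : pred I) (F G : I -> rat) :
  (forall i, P i -> F i \in pint p) -> (forall i, P i -> G i \in pint p) ->
  (forall i, P i -> F i - G i \in pmultiple p) ->
  \prod_(i <- r | P i) F i - \prod_(i <- r | P i) G i \in pmultiple p.
Proof.
move=> pF pG pFG.
pose cong a b := [/\ a \in pint p, b \in pint p & a - b \in pmultiple p].
suff [] : cong (\prod_(i <- r | P i) F i) (\prod_(i <- r | P i) G i) by [].
apply: (big_ind2 cong); first by split; rewrite ?rpred1 ?subrr ?rpred0.
  move=> a b a' b' [pa pb pab] [pa' pb' pab'].
  by split; [exact: rpredM | exact: rpredM | exact: pmultipleMB].
by move=> i Pi; split; [apply: pF | apply: pG | apply: pFG].
Qed.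

Lemma pmultiple_halfr x :
  odd p -> x *+ 2 \in pmultiple p -> x \in pmultiple p.
Proof.
move=> p_odd px2.
have -> : x = x *+ 2 / 2%:R by rewrite -[x *+ 2]mulr_natr mulfK.
by apply: pmultipleMr => //; apply: pintVn; rewrite coprimen2.
Qed.

Hypothesis p_gt0 : (0 < p)%N.

Let p_neq0 : p%:R != 0 :> rat.
Proof. by rewrite pnatr_eq0 -lt0n. Qed.

Lemma pmultiple_pint x : x \in pmultiple p -> x \in pint p.
Proof.
by rewrite pmultipleE => px; rewrite -(divfK p_neq0 x) rpredM ?rpred_nat.
Qed.

Lemma pmultiple_natM y : y \in pint p -> p%:R * y \in pmultiple p.
Proof. by rewrite pmultipleE mulrC mulKf. Qed.

End PMultiple.

Lemma pmultiple_cong0 p x : (1 < p)%N -> x \in pmultiple p -> cong0_Zp p x.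
Proof.
move=> p_gt1 px; have /pintP[d cpd /intrP[a xd]] := px.
have p_neq0 : p%:R != 0 :> rat by rewrite pnatr_eq0 -lt0n ltnW.
have xdE : x * d%:R = p%:R * a%:~R by rewrite -xd; field.
have num_den : (numq x * d%:Z = p%:Z * a * denq x)%R.
  by apply: (@intr_inj rat); rewrite !rmorphM /= numqE mulrAC xdE.
split.
  rewrite dvdzE -(Gauss_dvdl _ cpd) -[d in (_ * d)%N]absz_nat -abszM num_den.
  by rewrite !abszM absz_nat -mulnA dvdn_mulr.
rewrite dvdzE; have := pmultiple_pint (ltnW p_gt1) px; apply: contraTN => p_den.
by rewrite unfold_in /coprime (gcdn_idPl p_den) gtn_eqF.
Qed.

Lemma rising_reflect p n k : p = n.*2.+1 -> (k <= n)%N ->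
  rising (n - k).+1%:R n ^+ 2 - rising k.+1%:R n ^+ 2 \in pmultiple p.
Proof.
move=> pE kn; rewrite /rising (reindex_inj rev_ord_inj) /= -!prodrXl.
apply: pmultiple_prodB => i _; rewrite -!natrD ?rpredX ?rpred_nat //.
have i_lt_n := ltn_ord i.
have -> : ((n - k).+1 + (n - i.+1))%N = (p - (k.+1 + i))%N by lia.
set y := (k.+1 + i)%N; rewrite natrB; last by lia.
have -> : (p%:R - y%:R) ^+ 2 - y%:R ^+ 2 = p%:R * (p%:R - y%:R - y%:R) :> rat.
  by ring.
by apply: pmultiple_natM; [lia | rewrite !rpredB ?rpred_nat].
Qed.

Lemma harmDB n k : harm (n + k) - harm k = \sum_(i < n) (k + i).+1%:R^-1.
Proof. by rewrite /harm addnC big_split_ord /= addrAC subrr add0r. Qed.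

Lemma pint_harmDB p n k : prime p -> (n + k < p)%N ->
  harm (n + k) - harm k \in pint p.
Proof.
move=> p_prime nk_lt_p; rewrite harmDB rpred_sum // => i _.
by apply: pintVn; rewrite prime_coprime // gtnNdvd //; have := ltn_ord i; lia.
Qed.

Lemma harm_reflect p n k : prime p -> p = n.*2.+1 -> (k <= n)%N ->
  (harm (n + (n - k)) - harm (n - k)) + (harm (n + k) - harm k) \in pmultiple p.
Proof.
move=> p_prime pE kn; rewrite !harmDB (reindex_inj rev_ord_inj) -big_split.
apply: rpred_sum => i _ /=; have i_lt_n := ltn_ord i.
have -> : (n - k + (n - i.+1)).+1 = (p - (k + i).+1)%N by lia.
set y := (k + i).+1; have y_lt_p : (y < p)%N by lia.
have y_neq0 : y%:R != 0 :> rat by rewrite pnatr_eq0.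
have py_neq0 : (p - y)%:R != 0 :> rat by rewrite pnatr_eq0 subn_eq0 -ltnNge.
have -> : (p - y)%:R^-1 + y%:R^-1 = p%:R * (y * (p - y))%:R^-1 :> rat.
  have pE' : p%:R = (p - y)%:R + y%:R :> rat by rewrite -natrD subnK // ltnW.
  by rewrite natrM pE'; field; rewrite py_neq0 y_neq0.
apply: pmultiple_natM; first exact: prime_gt0.
by apply: pintVn; rewrite coprimeMr !prime_coprime // !gtnNdvd //; lia.
Qed.

Lemma sum4_rev_ord (R : nmodType) m (P : 'I_m -> 'I_m -> 'I_m -> 'I_m -> bool)
    (F : 'I_m -> 'I_m -> 'I_m -> 'I_m -> R) :
  (forall i j k l,
     P (rev_ord i) (rev_ord j) (rev_ord k) (rev_ord l) = P i j k l) ->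
  \sum_i \sum_j \sum_k \sum_(l | P i j k l) F i j k l =
  \sum_i \sum_j \sum_k \sum_(l | P i j k l)
    F (rev_ord i) (rev_ord j) (rev_ord k) (rev_ord l).
Proof.
move=> P_rev; rewrite (reindex_inj rev_ord_inj); apply: eq_bigr => i _.
rewrite (reindex_inj rev_ord_inj); apply: eq_bigr => j _.
rewrite (reindex_inj rev_ord_inj); apply: eq_bigr => k _.
by rewrite (reindex_inj rev_ord_inj); apply: eq_bigl => l; rewrite P_rev.
Qed.

Lemma pmultiple_sum4_reflect p n (A D : nat -> rat) : odd p ->
  (forall k, (k <= n)%N -> A k \in pint p) ->
  (forall k, (k <= n)%N -> A (n - k)%N - A k \in pmultiple p) ->
  (forall k, (k <= n)%N -> D k \in pint p) ->
  (forall k, (k <= n)%N -> D (n - k)%N + D k \in pmultiple p) ->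
  \sum_(k1 < n.+1) \sum_(k2 < n.+1) \sum_(k3 < n.+1)
     \sum_(k4 < n.+1 | (k1 + k2 + k3 + k4 == n.*2)%N)
       (A k1 * A k2 * A k3 * A k4 * D k4) \in pmultiple p.
Proof.
move=> p_odd pA pA_rev pD pD_rev; apply: pmultiple_halfr => //.
rewrite mulr2n [X in _ + X]sum4_rev_ord => [|i j k l]; last first.
  rewrite /= !subSS -addnn.
  have := ltn_ord i; have := ltn_ord j; have := ltn_ord k; have := ltn_ord l.
  lia.
rewrite -big_split; apply: rpred_sum => k1 _.
rewrite -big_split; apply: rpred_sum => k2 _.
rewrite -big_split; apply: rpred_sum => k3 _.
rewrite -big_split; apply: rpred_sum => k4 _.
rewrite /= !subSS.
set a := A k1 * _ * _ * _; set b := A (n - k1)%N * _ * _ * _.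
have -> : a * D k4 + b * D (n - k4)%N =
          a * (D (n - k4)%N + D k4) + (b - a) * D (n - k4)%N by ring.
apply: rpredD.
  by apply: pmultipleMl; rewrite ?pD_rev ?rpredM ?pA ?leq_ord.
apply: pmultipleMr; last by rewrite pD ?leq_subr.
by rewrite !pmultipleMB ?rpredM ?pA ?pA_rev ?leq_subr ?leq_ord.
Qed.

Theorem lemma2p10 (p : nat) (hp : prime p) (hodd : odd p) :
  cong0_Zp p
    (\sum_(k1 < (p.-1./2).+1) \sum_(k2 < (p.-1./2).+1)
     \sum_(k3 < (p.-1./2).+1) \sum_(k4 < (p.-1./2).+1
        | (k1 + k2 + k3 + k4 == p.-1)%N)
       ((rising (k1.+1)%:R p.-1./2) ^+ 2 * (rising (k2.+1)%:R p.-1./2) ^+ 2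
        * (rising (k3.+1)%:R p.-1./2) ^+ 2 * (rising (k4.+1)%:R p.-1./2) ^+ 2)
       * (harm (p.-1./2 + k4) - harm k4)).
Proof.
set n := p.-1./2.
have pE : p = n.*2.+1.
  by rewrite /n even_halfK ?prednK ?prime_gt0 // -oddS prednK ?prime_gt0.
have -> : p.-1 = n.*2 by rewrite {1}pE.
apply: pmultiple_cong0; first exact: prime_gt1.
apply: (pmultiple_sum4_reflect (A := fun k => rising k.+1%:R n ^+ 2)
                               (D := fun k => harm (n + k) - harm k)) => // k kn.
- by rewrite rpredX // rpred_prod // => i _; rewrite -natrD rpred_nat.
- exact: rising_reflect.
- by apply: pint_harmDB; lia.
- exact: harm_reflect.
Qed.
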